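(* Let $\ell\ge1$, $N=2^\ell$, $n_c,n_v\ge1$, ${\mathbf x}_{h,u}\in\mathbb{F}_2^\ell$ for $h\in\{0,\dots,n_c-1\}$, $u\in\{0,\dots,n_v-1\}$, and let $H$ be the block matrix whose $(h,u)$ block is $P_{{\mathbf x}_{h,u}}$. For $0\le h<i<j\le n_c-1$ and $m\in\{0,\dots,n_v-1\}$, let $\rho^{h,i,j}_m$ be the number of ordered pairs $(u,u')$ with $u,u'\in\{0,\dots,n_v-1\}\setminus\{m\}$, $u\ne u'$, and $${\mathbf x}_{h,u}+{\mathbf x}_{i,u}+{\mathbf x}_{i,m}={\mathbf x}_{h,u'}+{\mathbf x}_{j,u'}+{\mathbf x}_{j,m}.$$ Then the number of $6$-cycles in the Tanner graph of $H$ is $$\mathcal{N}_6=2^\ell\sum_{0\le h<i<j\le n_c-1}\ \sum_{m=0}^{n_v-1}\rho^{h,i,j}_m.$$ In particular, the Tanner graph of $H$ has no $6$-cycles if and only if all $\rho^{h,i,j}_m=0$.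
   Context: Rows and columns of $N\times N$ binary matrices are indexed by $\mathbb{F}_2^\ell$ via ${\mathbf x}=(x_1,\dots,x_\ell)\leftrightarrow 1+\sum_i x_i2^{i-1}$. For ${\mathbf a}\in\mathbb{F}_2^\ell$, $P_{\mathbf a}$ is the $N\times N$ binary matrix with $(P_{\mathbf a})_{{\mathbf x},{\mathbf y}}=1$ iff ${\mathbf y}={\mathbf x}+{\mathbf a}$. The Tanner graph of a binary matrix is the bipartite graph with check nodes = rows, variable nodes = columns, edges at the $1$-entries. A $k$-cycle is a closed walk of $k$ edges with distinct vertices and distinct edges. *)

From mathcomp Require Import all_boot all_order all_algebra.
Set Implicit Arguments. Unset Strict Implicit. Unset Printing Implicit Defensive.
Import GRing.Theory.
Local Open Scope ring_scope.

(* Index convention: the 0-based index k in {0,...,2^l-1} within a block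
   corresponds to x = (x_1,...,x_l) with k = sum_i x_i 2^(i-1),
   i.e. coordinate t (0-based) of x is the t-th binary digit of k. *)
Definition bits (l k : nat) : 'rV['F_2]_l :=
  \row_(t < l) (((k %/ 2 ^ t) %% 2)%N)%:R.

Definition Pmx (l : nat) (a : 'rV['F_2]_l) : 'M['F_2]_(2 ^ l) :=
  \matrix_(r, c) (bits l c == bits l r + a)%:R.

Definition Hmx (l nc nv : nat) (X : 'I_nc -> 'I_nv -> 'rV['F_2]_l)
  : 'M['F_2]_(\sum_(h < nc) 2 ^ l, \sum_(u < nv) 2 ^ l) :=
  \mxblock_(h < nc, u < nv) Pmx (X h u).

(* Tanner graph of a binary matrix A : vertices are rows (check nodes,
   inl) and columns (variable nodes, inr); edges are the 1-entries,
   represented by their position (row, column). *)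
Definition tvertex (r c : nat) := ('I_r + 'I_c)%type.

Definition edge_of (r c : nat) (v v' : tvertex r c) : option ('I_r * 'I_c) :=
  match v, v' with
  | inl i, inr j => Some (i, j)
  | inr j, inl i => Some (i, j)
  | _, _ => None
  end.

Definition walk_edges (r c k : nat) (w : {ffun 'I_k -> tvertex r c}) :=
  [seq edge_of (w t) (w (ordS t)) | t : 'I_k].

Definition is_edge (r c : nat) (A : 'M['F_2]_(r, c)) (o : option ('I_r * 'I_c)) :=
  if o is Some e then A e.1 e.2 != 0 else false.

Definition cycle_walk (r c k : nat) (A : 'M['F_2]_(r, c))
  (w : {ffun 'I_k -> tvertex r c}) : bool :=
  [&& all (is_edge A) (walk_edges w), injectiveb w & uniq (walk_edges w)].

Definition walk_edge_set (r c k : nat) (w : {ffun 'I_k -> tvertex r c})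
  : {set 'I_r * 'I_c} := [set e | Some e \in walk_edges w].

(* number of k-cycles of the Tanner graph: cycles counted as subgraphs,
   i.e. as the edge sets of such closed walks *)
Definition num_cycles (r c : nat) (A : 'M['F_2]_(r, c)) (k : nat) : nat :=
  #|[set E : {set 'I_r * 'I_c} |
      [exists w : {ffun 'I_k -> tvertex r c}, cycle_walk A w && (E == walk_edge_set w)]]|.

Definition rho (l nc nv : nat) (X : 'I_nc -> 'I_nv -> 'rV['F_2]_l)
  (h i j : 'I_nc) (m : 'I_nv) : nat :=
  #|[set p : 'I_nv * 'I_nv | [&& p.1 != m, p.2 != m, p.1 != p.2 &
       X h p.1 + X i p.1 + X i m == X h p.2 + X j p.2 + X j m]]|.

From mathcomp Require Import all_boot all_order all_algebra.
From mathcomp Require Import zify.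
Set Implicit Arguments. Unset Strict Implicit. Unset Printing Implicit Defensive.
Import GRing.Theory.
Local Open Scope ring_scope.

(* A 6-cycle of the Tanner graph alternates between three check nodes and
   three variable nodes. As every block of H is a permutation matrix, two
   check nodes adjacent to the same variable node lie in different block
   rows, and two variable nodes adjacent to the same check node lie in
   different block columns. Rotating or reflecting the cycle, we may list it
   as r0 - c1 - r2 - c3 - r4 - c5 - r0 with block rows h < i < j and block
   columns u, m, u' satisfying u != m, u' != m, u != u'. Conversely, a check
   node of block row h (2^l choices) and the indices (h, i, j, m, u, u')
   determine a unique walk of length 6 through the corresponding permutation
   blocks, and in characteristic 2 it closes up exactly when
   x_{h,u} + x_{i,u} + x_{i,m} = x_{h,u'} + x_{j,u'} + x_{j,m}. *)

Lemma bin_digits_inj (l k1 k2 : nat) : (k1 < 2 ^ l)%N -> (k2 < 2 ^ l)%N ->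
  (forall t, t < l -> k1 %/ 2 ^ t %% 2 = k2 %/ 2 ^ t %% 2)%N -> k1 = k2.
Proof.
elim: l k1 k2 => [|l IHl] k1 k2.
  by rewrite expn0 !ltnS !leqn0 => /eqP -> /eqP ->.
move=> lt1 lt2 eq_digits.
have := eq_digits 0%N isT; rewrite expn0 !divn1 => eq_lsb.
rewrite (divn_eq k1 2) (divn_eq k2 2) eq_lsb (IHl (k1 %/ 2)%N (k2 %/ 2)%N) //.
- by rewrite ltn_divLR // -expnSr.
- by rewrite ltn_divLR // -expnSr.
- by move=> t lt_tl; rewrite -!divnMA -expnS eq_digits.
Qed.
Lemma bits_inj (l : nat) : injective (fun k : 'I_(2 ^ l) => bits l k).
Proof.
move=> k1 k2 /rowP eq_bits; apply/val_inj/(@bin_digits_inj l); rewrite ?ltn_ord //.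
move=> t lt_tl; have := congr1 (@nat_of_ord _) (eq_bits (Ordinal lt_tl)).
by rewrite !mxE !val_Fp_nat // !modn_mod.
Qed.

Lemma bits_surj (l : nat) (v : 'rV['F_2]_l) : exists k : 'I_(2 ^ l), bits l k = v.
Proof.
have := inj_card_onto (@bits_inj l) _ v.
rewrite card_mx card_Fp // card_ord mul1n => /(_ (leqnn _)) /codomP [k ->].
by exists k.
Qed.

Lemma addrr_F2 (l : nat) (v : 'rV['F_2]_l) : v + v = 0.
Proof.
rewrite -mulr2n -scaler_nat.
have two0 : 2%:R = 0 :> 'F_2 by apply/val_inj.
by rewrite two0 scale0r.
Qed.

Section Char2.
Variable V : zmodType.
Hypothesis addrr0 : forall x : V, x + x = 0.

Lemma addr_char2K (x y : V) : x + y + y = x.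
Proof. by rewrite -addrA addrr0 addr0. Qed.

Lemma eq_addr_char2C (x y a : V) : (y == x + a) = (x == y + a).
Proof. by apply/eqP/eqP => ->; rewrite addr_char2K. Qed.

(* The hexagon closes iff its six steps sum to zero; the equation is arranged
   as in the definition of [rho]. *)
Lemma char2_hexagon_closed (v0 v1 v2 v3 v4 v5 a1 a2 a3 a4 a5 a6 : V) :
  v1 = v0 + a1 -> v2 = v1 + a2 -> v3 = v2 + a3 -> v4 = v3 + a4 -> v5 = v4 + a5 ->
  v5 = v0 + a6 <-> a1 + a2 + a3 = a6 + a5 + a4.
Proof.
move=> -> -> -> -> ->; split => [|E].
  by rewrite -!addrA => /addrI <-; rewrite !addrA !addr_char2K.
have -> : v0 + a1 + a2 + a3 = v0 + (a1 + a2 + a3) by rewrite !addrA.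
by rewrite E !addrA !addr_char2K.
Qed.

End Char2.

Lemma enum_ord6 : enum 'I_6 = [:: inord 0; inord 1; inord 2; inord 3; inord 4; inord 5].
Proof. by apply: (inj_map val_inj); rewrite val_enum_ord /= !inordK. Qed.

Lemma ordS_ord6 (k : nat) : (k < 6)%N -> ordS (inord k : 'I_6) = inord (k.+1 %% 6).
Proof. by move=> lt_k6; apply/val_inj; rewrite /= !inordK // ltn_mod. Qed.

Lemma walk_edges6 (r c : nat) (w : {ffun 'I_6 -> tvertex r c}) :
  walk_edges w = [:: edge_of (w (inord 0)) (w (inord 1)); edge_of (w (inord 1)) (w (inord 2));
                     edge_of (w (inord 2)) (w (inord 3)); edge_of (w (inord 3)) (w (inord 4));
                     edge_of (w (inord 4)) (w (inord 5)); edge_of (w (inord 5)) (w (inord 0))].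
Proof. by rewrite /walk_edges /image_mem enum_ord6 /= !ordS_ord6. Qed.

Lemma injectiveb_ord6 (T : eqType) (f : 'I_6 -> T) :
  injectiveb f =
  uniq [:: f (inord 0); f (inord 1); f (inord 2); f (inord 3); f (inord 4); f (inord 5)].
Proof. by rewrite /injectiveb /dinjectiveb enum_ord6. Qed.

Lemma uniq_alternating (A B : eqType) (a0 a2 a4 : A) (b1 b3 b5 : B) :
  uniq [:: inl a0; inr b1; inl a2; inr b3; inl a4; inr b5] =
  uniq [:: a0; a2; a4] && uniq [:: b1; b3; b5].
Proof.
rewrite /= !inE -!sum_eqE /= !orbF !andbT -andbA; congr (_ && _).
by rewrite andbCA.
Qed.

Lemma sum_prod_nat (A B : finType) (F : A * B -> nat) :
  (\sum_(q : A * B) F q = \sum_(a : A) \sum_(b : B) F (a, b))%N.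
Proof. by rewrite pair_bigA; apply: eq_bigr => -[]. Qed.

Lemma eq_common_mem2 (T : eqType) (a b c x : T) :
  b != c -> (x == a) || (x == b) -> (x == a) || (x == c) -> x = a.
Proof. by move=> neq_bc; case: eqP => //= _ /eqP xb /eqP xc; rewrite -xb -xc eqxx in neq_bc. Qed.

Section BlockIndex.
Variables (l n : nat).
Local Notation I := 'I_(\sum_(b < n) 2 ^ l).

Definition blk (r : I) : 'I_n := tagnat.sig1 r.
Definition pos (r : I) : 'rV['F_2]_l := bits l (tagnat.sig2 r).

Lemma blk_pos_inj (r r' : I) : blk r = blk r' -> pos r = pos r' -> r = r'.
Proof.
move=> eq_blk /bits_inj eq_off; apply/val_inj.
rewrite [LHS]tagnat.rect [RHS]tagnat.rect -/(blk r) -/(blk r') eq_blk.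
by rewrite eq_off.
Qed.

Lemma blk_pos_surj (b : 'I_n) (v : 'rV['F_2]_l) : exists r : I, blk r = b /\ pos r = v.
Proof.
have [k <-] := bits_surj v.
exists (tagnat.Rank b k); split; first exact: tagnat.Rank1K.
by rewrite /pos (_ : tagnat.sig2 _ = k) //; apply/val_inj; rewrite tagnat.Rank2K.
Qed.

End BlockIndex.

Section Hexagons.
Variables (l nc nv : nat) (X : 'I_nc -> 'I_nv -> 'rV['F_2]_l).
Local Notation R := 'I_(\sum_(h < nc) 2 ^ l).
Local Notation C := 'I_(\sum_(u < nv) 2 ^ l).

Definition adj (r : R) (c : C) : bool := pos c == pos r + X (blk r) (blk c).

Lemma Hmx_neq0 (r : R) (c : C) : (Hmx X r c != 0) = adj r c.
Proof.
rewrite /Hmx /mxblock !mxE /adj /pos /blk.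
by case: (bits _ _ == _); rewrite ?oner_eq0 ?eqxx.
Qed.

Lemma adjC (r : R) (c : C) : adj r c = (pos r == pos c + X (blk r) (blk c)).
Proof. exact/eq_addr_char2C/addrr_F2. Qed.

Lemma adj_blk_injr (r : R) (c c' : C) : adj r c -> adj r c' -> blk c = blk c' -> c = c'.
Proof.
move=> /eqP adj_c /eqP adj_c' eq_blk; apply: blk_pos_inj => //.
by rewrite adj_c adj_c' eq_blk.
Qed.

Lemma adj_blk_injl (r r' : R) (c : C) : adj r c -> adj r' c -> blk r = blk r' -> r = r'.
Proof.
rewrite !adjC => /eqP adj_r /eqP adj_r' eq_blk; apply: blk_pos_inj => //.
by rewrite adj_r adj_r' eq_blk.
Qed.

Definition hex := (R * C * R * C * R * C)%type.

Definition hex_edge_seq (t : hex) : seq (R * C) :=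
  let: (r0, c1, r2, c3, r4, c5) := t in
  [:: (r0, c1); (r2, c1); (r2, c3); (r4, c3); (r4, c5); (r0, c5)].

Definition hex_rows (t : hex) : seq R := let: (r0, _, r2, _, r4, _) := t in [:: r0; r2; r4].
Definition hex_cols (t : hex) : seq C := let: (_, c1, _, c3, _, c5) := t in [:: c1; c3; c5].

Definition hex_edges (t : hex) : {set R * C} := [set e in hex_edge_seq t].

Definition hex_cycle (t : hex) : bool :=
  all (fun e => adj e.1 e.2) (hex_edge_seq t) && uniq (hex_cols t).

Definition blk_lt (r r' : R) : bool := (blk r < blk r')%N.

(* The representative of a 6-cycle: its check nodes listed by increasing block row. *)
Definition canonical (t : hex) : bool := hex_cycle t && sorted blk_lt (hex_rows t).

Lemma blk_lt_trans : transitive blk_lt.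
Proof. by move=> y x z; apply: ltn_trans. Qed.

Lemma blk_lt_irr : irreflexive blk_lt.
Proof. by move=> r; apply: ltnn. Qed.

Lemma canonical_sorted t : canonical t -> sorted blk_lt (hex_rows t).
Proof. by case/andP. Qed.

Lemma canonical_uniq_rows t : canonical t -> uniq (hex_rows t).
Proof. by move/canonical_sorted/(sorted_uniq blk_lt_trans blk_lt_irr). Qed.

Lemma uniq_hex_edge_seq t : uniq (hex_rows t) -> uniq (hex_cols t) -> uniq (hex_edge_seq t).
Proof.
case: t => [[[[[r0 c1] r2] c3] r4] c5] /=; rewrite !inE !negb_or !andbT.
move=> /andP [/andP [n02 n04] n24] /andP [/andP [n13 n15] n35].
rewrite !xpair_eqE !eqxx ![_ == r0]eq_sym.
by rewrite (negbTE n02) (negbTE n04) (negbTE n24) (negbTE n13) (negbTE n15) (negbTE n35).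
Qed.

Definition hex_rot (t : hex) : hex :=
  let: (r0, c1, r2, c3, r4, c5) := t in (r2, c3, r4, c5, r0, c1).
Definition hex_flip (t : hex) : hex :=
  let: (r0, c1, r2, c3, r4, c5) := t in (r0, c5, r4, c3, r2, c1).

Lemma hex_edge_seq_rot t : hex_edge_seq (hex_rot t) = rot 2 (hex_edge_seq t).
Proof. by case: t => [[[[[? ?] ?] ?] ?] ?]. Qed.

Lemma hex_edge_seq_flip t : hex_edge_seq (hex_flip t) = rev (hex_edge_seq t).
Proof. by case: t => [[[[[? ?] ?] ?] ?] ?]. Qed.

Lemma hex_cols_rot t : hex_cols (hex_rot t) = rot 1 (hex_cols t).
Proof. by case: t => [[[[[? ?] ?] ?] ?] ?]. Qed.

Lemma hex_cols_flip t : hex_cols (hex_flip t) = rev (hex_cols t).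
Proof. by case: t => [[[[[? ?] ?] ?] ?] ?]. Qed.

Lemma hex_edges_rot t : hex_edges (hex_rot t) = hex_edges t.
Proof. by apply/setP => e; rewrite !inE hex_edge_seq_rot mem_rot. Qed.

Lemma hex_edges_flip t : hex_edges (hex_flip t) = hex_edges t.
Proof. by apply/setP => e; rewrite !inE hex_edge_seq_flip mem_rev. Qed.

Lemma hex_cycle_rot t : hex_cycle (hex_rot t) = hex_cycle t.
Proof. by rewrite /hex_cycle hex_edge_seq_rot hex_cols_rot rot_uniq (eq_all_r (mem_rot _ _)). Qed.

Lemma hex_cycle_flip t : hex_cycle (hex_flip t) = hex_cycle t.
Proof. by rewrite /hex_cycle hex_edge_seq_flip hex_cols_flip rev_uniq (eq_all_r (mem_rev _)). Qed.

Lemma hex_cycle_uniq_blk t : hex_cycle t -> uniq (hex_rows t) -> uniq [seq blk r | r <- hex_rows t].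
Proof.
case: t => [[[[[r0 c1] r2] c3] r4] c5].
case/andP => /= /and5P [a01 a21 a23 a43 /andP [a45 /andP [a05 _]]] _.
rewrite /= !inE !andbT negb_or => /andP [/andP [n02 n04] n24].
by rewrite negb_or (contra_neq (adj_blk_injl a01 a21) n02) (contra_neq (adj_blk_injl a05 a45) n04)
  (contra_neq (adj_blk_injl a23 a43) n24).
Qed.

Definition hex_dihedral (t : hex) : seq hex :=
  [:: t; hex_flip t; hex_rot t; hex_flip (hex_rot t);
      hex_rot (hex_rot t); hex_flip (hex_rot (hex_rot t))].

Lemma hex_sort t : hex_cycle t -> uniq [seq blk r | r <- hex_rows t] ->
  exists2 t', canonical t' & hex_edges t' = hex_edges t.
Proof.
move=> cycle_t uniq_blk.
have /hasP [t' dih_t' sorted_t'] : has (fun t' => sorted blk_lt (hex_rows t')) (hex_dihedral t).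
  move: uniq_blk; case: t {cycle_t} => [[[[[r0 c1] r2] c3] r4] c5].
  rewrite /= /blk_lt !inE andbT -!val_eqE /=; lia.
have /andP [/allP cycle_dih /allP edges_dih] :
    all (fun t' => hex_cycle t' == hex_cycle t) (hex_dihedral t) &&
    all (fun t' => hex_edges t' == hex_edges t) (hex_dihedral t).
  by rewrite /= !hex_cycle_flip !hex_cycle_rot !hex_edges_flip !hex_edges_rot !eqxx.
exists t'; last exact/eqP/edges_dih.
by rewrite /canonical sorted_t' (eqP (cycle_dih _ dih_t')) cycle_t.
Qed.

Lemma walk_hex (w : {ffun 'I_6 -> tvertex (\sum_(h < nc) 2 ^ l) (\sum_(u < nv) 2 ^ l)}) :
  cycle_walk (Hmx X) w ->
  exists t, [/\ hex_cycle t, uniq (hex_rows t) & hex_edges t = walk_edge_set w].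
Proof.
case/and3P => + + _; rewrite /walk_edge_set walk_edges6 injectiveb_ord6.
case: (w (inord 0)) => x0; case: (w (inord 1)) => x1; case: (w (inord 2)) => x2;
case: (w (inord 3)) => x3; case: (w (inord 4)) => x4; case: (w (inord 5)) => x5;
rewrite [all _ _]/= ?andbF //.
- case/and5P => a01 a21 a23 a43 /andP [a45 /andP [a05 _]].
  rewrite uniq_alternating => /andP [uniq_rows uniq_cols].
  exists (x0, x1, x2, x3, x4, x5); split=> [|//|].
  + by rewrite /hex_cycle /= -!Hmx_neq0 a01 a21 a23 a43 a45 a05.
  + by apply/setP => e; rewrite !in_set -(mem_map Some_inj).
- case/and5P => a10 a12 a32 a34 /andP [a54 /andP [a50 _]].
  rewrite -(rot_uniq 1) uniq_alternating => /andP [uniq_rows uniq_cols].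
  exists (x1, x2, x3, x4, x5, x0); split=> [|//|].
  + by rewrite /hex_cycle /= -!Hmx_neq0 a10 a12 a32 a34 a54 a50.
  + by apply/setP => e; rewrite !in_set -(mem_map Some_inj) -(mem_rot 5).
Qed.

Lemma canonical_walk t : canonical t ->
  exists w : {ffun 'I_6 -> tvertex (\sum_(h < nc) 2 ^ l) (\sum_(u < nv) 2 ^ l)},
    cycle_walk (Hmx X) w && (hex_edges t == walk_edge_set w).
Proof.
move=> canon_t; have uniq_rows := canonical_uniq_rows canon_t.
case/andP: canon_t => /andP [edges_t uniq_cols] _.
have uniq_edges := uniq_hex_edge_seq uniq_rows uniq_cols.
move: t edges_t uniq_rows uniq_cols uniq_edges => [[[[[r0 c1] r2] c3] r4] c5].
move=> edges_t uniq_rows uniq_cols uniq_edges.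
pose L : seq (R + C) := [:: inl r0; inr c1; inl r2; inr c3; inl r4; inr c5].
pose w := [ffun k : 'I_6 => nth (inl r0) L k].
have wE k : (k < 6)%N -> w (inord k) = nth (inl r0) L k.
  by move=> lt_k6; rewrite ffunE inordK.
have walk_edgesE : walk_edges w = map Some (hex_edge_seq (r0, c1, r2, c3, r4, c5)).
  by rewrite walk_edges6 !wE.
exists w; rewrite /cycle_walk /walk_edge_set walk_edgesE (map_inj_uniq Some_inj) uniq_edges.
rewrite injectiveb_ord6 !wE // uniq_alternating uniq_rows uniq_cols all_map !andbT.
apply/andP; split.
  by move: edges_t; apply: sub_all => -[r c]; rewrite /preim /= Hmx_neq0.
by apply/eqP/setP => e; rewrite !in_set -(mem_map Some_inj).
Qed.

Lemma mem_hex_rows t r : (r \in hex_rows t) = [exists c, (r, c) \in hex_edges t].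
Proof.
case: t => [[[[[r0 c1] r2] c3] r4] c5]; apply/idP/existsP => [|[c]]; rewrite !inE.
  by case/or3P => /eqP ->; [exists c1 | exists c3 | exists c5]; rewrite !inE eqxx ?orbT.
by rewrite !xpair_eqE; case: (r == r0); case: (r == r2); case: (r == r4).
Qed.

Lemma canonical_common_col r0 c1 r2 c3 r4 c5 c (E := hex_edges (r0, c1, r2, c3, r4, c5)) :
  canonical (r0, c1, r2, c3, r4, c5) ->
  [/\ (r0, c) \in E -> (r2, c) \in E -> c = c1,
      (r2, c) \in E -> (r4, c) \in E -> c = c3
    & (r4, c) \in E -> (r0, c) \in E -> c = c5].
Proof.
move=> canon; have := canonical_uniq_rows canon; case/andP: canon => /andP [_ +] _.
rewrite /E /= !inE !negb_or !andbT => /andP [/andP [n13 n15] n35] /andP [/andP [n02 n04] n24].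
rewrite !xpair_eqE !eqxx ![_ == r0]eq_sym ![r4 == _]eq_sym.
rewrite (negbTE n02) (negbTE n04) (negbTE n24) /= !orbF; split.
- by apply: eq_common_mem2; rewrite eq_sym.
- by rewrite orbC; apply: eq_common_mem2.
- by rewrite orbC [(c == c1) || _]orbC; apply: eq_common_mem2; rewrite eq_sym.
Qed.

Lemma hex_edges_inj : {in canonical &, injective hex_edges}.
Proof.
move=> [[[[[r0 c1] r2] c3] r4] c5] [[[[[s0 d1] s2] d3] s4] d5] canon_t canon_s eq_edges.
have [eq_r0 eq_r2 eq_r4] : [:: r0; r2; r4] = [:: s0; s2; s4].
  apply: (irr_sorted_eq blk_lt_trans blk_lt_irr).
  - exact: canonical_sorted canon_t.
  - exact: canonical_sorted canon_s.
  - move=> r; rewrite (mem_hex_rows (r0, c1, r2, c3, r4, c5)) eq_edges.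
    by rewrite -(mem_hex_rows (s0, d1, s2, d3, s4, d5)).
subst s0 s2 s4.
have on_t r c : (r, c) \in hex_edge_seq (r0, d1, r2, d3, r4, d5) ->
    (r, c) \in hex_edges (r0, c1, r2, c3, r4, c5).
  by rewrite eq_edges in_set.
have [d1E _ _] := canonical_common_col d1 canon_t.
have [_ d3E _] := canonical_common_col d3 canon_t.
have [_ _ d5E] := canonical_common_col d5 canon_t.
by rewrite d1E 1?d3E 1?d5E //; apply: on_t; rewrite !inE eqxx ?orbT.
Qed.

Definition hex_code (t : hex) : 'rV['F_2]_l * ('I_nc * 'I_nc * 'I_nc * 'I_nv * 'I_nv * 'I_nv) :=
  let: (r0, c1, r2, c3, r4, c5) := t in
  (pos r0, (blk r0, blk r2, blk r4, blk c3, blk c1, blk c5)).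

Definition rho_cond (q : 'I_nc * 'I_nc * 'I_nc * 'I_nv * 'I_nv * 'I_nv) : bool :=
  let: (h, i, j, m, u, u') := q in
  [&& (h < i)%N, (i < j)%N, u != m, u' != m, u != u'
    & X h u + X i u + X i m == X h u' + X j u' + X j m].

(* Each vertex of a 6-cycle is determined by its predecessor and its own
   block, the blocks being permutation matrices. *)
Lemma hex_code_inj : {in canonical &, injective hex_code}.
Proof.
move=> [[[[[r0 c1] r2] c3] r4] c5] [[[[[s0 d1] s2] d3] s4] d5].
move=> /andP [/andP [/= /and5P [a01 a21 a23 a43 /andP [a45 _]] _] _].
move=> /andP [/andP [/= /and5P [b01 b21 b23 b43 /andP [b45 _]] _] _].
case=> pos_r0 blk_r0 blk_r2 blk_r4 blk_c3 blk_c1 blk_c5.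
have E0 := blk_pos_inj blk_r0 pos_r0; subst s0.
have E1 := adj_blk_injr a01 b01 blk_c1; subst d1.
have E2 := adj_blk_injl a21 b21 blk_r2; subst s2.
have E3 := adj_blk_injr a23 b23 blk_c3; subst d3.
have E4 := adj_blk_injl a43 b43 blk_r4; subst s4.
by rewrite (adj_blk_injr a45 b45 blk_c5).
Qed.

Lemma canonical_rho_cond t : canonical t -> rho_cond (hex_code t).2.
Proof.
case: t => [[[[[r0 c1] r2] c3] r4] c5].
case/andP => /andP [/= /and5P [a01 a21 a23 a43 /andP [a45 /andP [a05 _]]]].
rewrite /= !inE !negb_or !andbT /blk_lt => /andP [/andP [n13 n15] n35] /andP [lt02 lt24].
have n53 : blk c5 != blk c3 by apply: contra_neq (adj_blk_injr a45 a43) _; rewrite eq_sym.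
rewrite lt02 lt24 (contra_neq (adj_blk_injr a21 a23) n13) n53.
rewrite (contra_neq (adj_blk_injr a01 a05) n15) /=.
rewrite adjC in a21; rewrite adjC in a43.
apply/eqP/(char2_hexagon_closed (@addrr_F2 l) _
  (eqP a01) (eqP a21) (eqP a23) (eqP a43) (eqP a45)).1.
exact/eqP.
Qed.

Lemma rho_cond_canonical v q : rho_cond q -> exists2 t, canonical t & hex_code t = (v, q).
Proof.
case: q => [[[[[h i] j] m] u] u'] /and5P [lt_hi lt_ij neq_um neq_u'm /andP [neq_uu' closed]].
have [r0 [b0 p0]] := blk_pos_surj h v.
have [c1 [b1 p1]] := blk_pos_surj u (pos r0 + X h u).
have [r2 [b2 p2]] := blk_pos_surj i (pos c1 + X i u).
have [c3 [b3 p3]] := blk_pos_surj m (pos r2 + X i m).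
have [r4 [b4 p4]] := blk_pos_surj j (pos c3 + X j m).
have [c5 [b5 p5]] := blk_pos_surj u' (pos r4 + X j u').
have p5' : pos c5 = pos r0 + X h u'.
  exact/(char2_hexagon_closed (@addrr_F2 l) _ p1 p2 p3 p4 p5).2/eqP.
have neq_blk (x y : C) : blk x != blk y -> x != y by apply: contra_neq => ->.
have n13 : c1 != c3 by apply: neq_blk; rewrite b1 b3.
have n15 : c1 != c5 by apply: neq_blk; rewrite b1 b5.
have n35 : c3 != c5 by apply: neq_blk; rewrite b3 b5 eq_sym.
exists (r0, c1, r2, c3, r4, c5); last by rewrite /= b0 p0 b2 b4 b3 b1 b5.
rewrite /canonical /hex_cycle /= [adj r2 c1]adjC [adj r4 c3]adjC /adj /blk_lt.
rewrite b0 b1 b2 b3 b4 b5 -p1 -p2 -p3 -p4 -p5 -p5' !eqxx lt_hi lt_ij /=.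
by rewrite !inE !negb_or n13 n15 n35.
Qed.

Lemma walk_canonical (w : {ffun 'I_6 -> tvertex (\sum_(h < nc) 2 ^ l) (\sum_(u < nv) 2 ^ l)}) :
  cycle_walk (Hmx X) w -> exists2 t, canonical t & hex_edges t = walk_edge_set w.
Proof.
case/walk_hex => t [cycle_t uniq_rows <-].
exact: hex_sort cycle_t (hex_cycle_uniq_blk cycle_t uniq_rows).
Qed.

Lemma num_cycles6_canonical : num_cycles (Hmx X) 6 = #|canonical|.
Proof.
rewrite /num_cycles -(card_in_imset hex_edges_inj); apply: eq_card => E.
rewrite inE; apply/existsP/imsetP => [[w /andP [walk_w /eqP ->]] | [t canon_t ->]].
  by have [t canon_t <-] := walk_canonical walk_w; exists t.
by have [w walk_w] := canonical_walk canon_t; exists w.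
Qed.

Lemma hex_code_image : [set hex_code t | t in canonical] = [set q | rho_cond q.2].
Proof.
apply/setP => -[v q]; rewrite inE; apply/imsetP/idP => [[t canon_t ->] | /rho_cond_canonical].
  exact: canonical_rho_cond.
by move=> /(_ v) [t canon_t <-]; exists t.
Qed.

Lemma card_rho_cond : #|[set q | rho_cond q]| =
  (\sum_(h < nc) \sum_(i < nc | h < i) \sum_(j < nc | i < j) \sum_(m < nv) rho X h i j m)%N.
Proof.
rewrite -sum1dep_card big_mkcond !sum_prod_nat /=; apply: eq_bigr => h _.
rewrite [RHS]big_mkcond; apply: eq_bigr => i _.
have [lt_hi | _] := ltnP h i; last by rewrite /= !big1_eq.
rewrite [RHS]big_mkcond; apply: eq_bigr => j _.
have [lt_ij | _] := ltnP i j; last by rewrite /= !big1_eq.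
apply: eq_bigr => m _.
by rewrite /rho -sum1dep_card [RHS]big_mkcond sum_prod_nat.
Qed.

Lemma card_code_image :
  #|[set q : 'rV['F_2]_l * _ | rho_cond q.2]| = (2 ^ l * #|[set q | rho_cond q]|)%N.
Proof.
have -> : [set q | rho_cond q.2] = setX [set: 'rV['F_2]_l] [set q | rho_cond q].
  by apply/setP => -[v q]; rewrite !inE.
by rewrite cardsX cardsT card_mx card_Fp // mul1n.
Qed.

Lemma num_cycles6 : num_cycles (Hmx X) 6 =
  (2 ^ l * \sum_(h < nc) \sum_(i < nc | h < i) \sum_(j < nc | i < j) \sum_(m < nv) rho X h i j m)%N.
Proof.
rewrite num_cycles6_canonical -(card_in_imset hex_code_inj) hex_code_image.
by rewrite card_code_image card_rho_cond.
Qed.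

End Hexagons.

Lemma sum_rho_eq0 (l nc nv : nat) (X : 'I_nc -> 'I_nv -> 'rV['F_2]_l) :
  (\sum_(h < nc) \sum_(i < nc | h < i) \sum_(j < nc | i < j) \sum_(m < nv) rho X h i j m)%N
    = 0%N <->
  (forall (h i j : 'I_nc) (m : 'I_nv), (h < i)%N -> (i < j)%N -> rho X h i j m = 0%N).
Proof.
split=> [| rho0].
  move=> /eqP; rewrite sum_nat_eq0 => /forallP sum0 h i j m lt_hi lt_ij.
  move: (sum0 h); rewrite sum_nat_eq0 => /forallP /(_ i); rewrite lt_hi /=.
  rewrite sum_nat_eq0 => /forallP /(_ j); rewrite lt_ij /=.
  by rewrite sum_nat_eq0 => /forallP /(_ m) /eqP.
rewrite big1 // => h _; rewrite big1 // => i lt_hi; rewrite big1 // => j lt_ij.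
by rewrite big1 // => m _; apply: rho0.
Qed.

Theorem mainTheorem14 (l nc nv : nat) (X : 'I_nc -> 'I_nv -> 'rV['F_2]_l) :
  (1 <= l)%N -> (1 <= nc)%N -> (1 <= nv)%N ->
  num_cycles (Hmx X) 6 =
    (2 ^ l * \sum_(h < nc) \sum_(i < nc | (h < i)%N) \sum_(j < nc | (i < j)%N)
               \sum_(m < nv) rho X h i j m)%N
  /\ (num_cycles (Hmx X) 6 = 0%N <->
      (forall (h i j : 'I_nc) (m : 'I_nv), (h < i)%N -> (i < j)%N -> rho X h i j m = 0%N)).
Proof.
move=> _ _ _; rewrite num_cycles6 -sum_rho_eq0; split=> //.
split=> [/eqP | ->]; last by rewrite muln0.
by rewrite muln_eq0 expn_eq0 => /orP [// | /eqP].
Qed.
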